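(* Let $\mathcal{G}$ be a finite tree and let $i,j$ be adjacent nodes, with $d_i$ the degree of $i$ in $\mathcal{G}$. Let $\mathcal{G}_i$ be the connected component containing $i$ of the graph obtained from $\mathcal{G}$ by deleting the edge $(i,j)$, with edge set $\mathcal{E}(\mathcal{G}_i)$. Then the access time of the begrudgingly backtracking random walk from $i$ to $j$ is $$\tilde{\mathtt{t}}(i,j)=1+2|\mathcal{E}(\mathcal{G}_i)|\cdot\frac{d_i-1}{d_i}.$$
   Context: Begrudgingly backtracking random walk (BBRW) on $\mathcal{G}$: $x_1$ is uniform on the neighbors of $x_0$; for $n\ge0$, given $x_n=u,x_{n+1}=v$, $x_{n+2}$ is uniform on $\mathcal{N}(v)\setminus\{u\}$ if this set is nonempty, and $x_{n+2}=u$ otherwise. For a node $k$, $T_k=\min\{n\ge0:x_n=k\}$ and the access time is $\tilde{\mathtt{t}}(i,k)=\mathbb{E}[T_k\mid x_0=i]$. *)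

From HB Require Import structures.
From mathcomp Require Import all_boot all_order all_algebra.
From mathcomp Require Import boolp classical_sets reals constructive_ereal ereal sequences.
Set Implicit Arguments. Unset Strict Implicit. Unset Printing Implicit Defensive.
Import Order.TTheory GRing.Theory Num.Theory.

Local Open Scope ring_scope.

Section BBRW.
Variables (R : realType) (T : finType) (e : rel T).

Definition simple_graph := symmetric e /\ irreflexive e.

Definition is_tree :=
  (forall x y : T, connect e x y) /\
  (forall c : seq T, uniq c -> (3 <= size c)%N -> ~~ cycle e c).

Definition nbhd (v : T) : {set T} := [set w | e v w].
Definition deg (v : T) : nat := #|nbhd v|.

(* BBRW transition probability: P(x_{n+2} = w | x_n = u, x_{n+1} = v) *)
Definition bb_step (u v w : T) : R :=
  let A := nbhd v :\ u in
  if #|A| == 0%N then (w == u)%:R else (w \in A)%:R / #|A|%:R.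

Fixpoint tail_prob (u v : T) (s : seq T) : R :=
  if s is w :: s' then bb_step u v w * tail_prob v w s' else 1.

(* probability that (x_1,...,x_n) = s given x_0 = x0 *)
Definition path_prob (x0 : T) (s : seq T) : R :=
  if s is x1 :: s' then (e x0 x1)%:R / (deg x0)%:R * tail_prob x0 x1 s' else 1.

(* P(T_k = n | x_0 = i) *)
Definition hit_prob (i k : T) (n : nat) : R :=
  \sum_(s : n.-tuple T)
     path_prob i s * ((last i s == k) && all (fun x => x != k) (belast i s))%:R.

(* access time E[T_k | x_0 = i] in the extended reals:
   sum_n n P(T_k = n), or +oo if T_k = oo with positive probability *)
Definition access_time (i k : T) : \bar R :=
  if `[< (\sum_(0 <= n <oo) (hit_prob i k n)%:E = 1)%E >]
  then (\sum_(0 <= n <oo) ((n%:R * hit_prob i k n)%:E))%E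
  else (+oo)%E.

Definition del_edge (i j : T) : rel T :=
  fun u v => e u v && ([set u; v] != [set i; j]).

Definition comp_del (i j : T) : {set T} := [set u | connect (del_edge i j) i u].

Definition comp_edges (i j : T) : {set {set T}} :=
  [set [set p.1; p.2] | p in [set p : T * T |
     [&& p.1 \in comp_del i j, p.2 \in comp_del i j & del_edge i j p.1 p.2]]].

End BBRW.

From HB Require Import structures.
From mathcomp Require Import all_boot all_order all_algebra.
From mathcomp Require Import boolp classical_sets reals constructive_ereal ereal sequences.
From mathcomp Require Import topology normedtype.
From mathcomp Require Import ring lra.
Import Order.TTheory GRing.Theory Num.Theory.
Set Implicit Arguments. Unset Strict Implicit. Unset Printing Implicit Defensive.
Local Open Scope ring_scope.

(* Root the tree at j and let E_v be the number of edges of the subtree hanging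
   at v.  Entering the subtree of a vertex c from its parent, the walk comes
   back after 1 + 2 E_c steps on average.  Solving the first-step equations at
   a vertex b with d_b - 1 children then gives the mean time to get from the
   move a -> b (a a child of b) to the move from b to its parent:
   ((d_b - 1)(1 + 2 E_b) - (1 + 2 E_a)) / d_b.  Summing these along the path to
   j makes every mean hitting time explicit; from a fresh start at i, whose
   parent is j, it is 1 + 2 E_i (d_i - 1) / d_i.

   These explicit values are nonnegative and satisfy the first-step equations
   of the walk seen as a Markov chain on ordered pairs of vertices.  On a finite
   chain such a solution tau is the mean hitting time: iterating the equations
   gives tau = sum_(k < N) P(T_j > k) + r_N with 0 <= r_N <= (max tau) P(T_j > N),
   and N P(T_j > N) <= tau forces P(T_j > N) to vanish. *)

Lemma big_tupleS (V : nmodType) (T : finType) n (F : n.+1.-tuple T -> V) :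
  \sum_(s : n.+1.-tuple T) F s = \sum_(w : T) \sum_(t : n.-tuple T) F [tuple of w :: t].
Proof.
rewrite pair_big /= (reindex (fun p : T * n.-tuple T => [tuple of p.1 :: p.2])) //=.
exists (fun s : n.+1.-tuple T => (thead s, [tuple of behead s])).
  by move=> [x t] _ /=; rewrite theadE; congr pair; apply/val_inj.
by move=> s _; apply/val_inj; case: s => [[|a l] //].
Qed.

Lemma big_tuple0 (V : nmodType) (T : finType) (F : 0.-tuple T -> V) :
  \sum_(s : 0.-tuple T) F s = F [tuple].
Proof. by rewrite (big_pred1 [tuple]) // => s; apply/esym/eqP; exact: tuple0. Qed.

Lemma nneseries_eq_sup (R : realType) (u : nat -> R) (b : R) :
  (forall n, 0 <= u n) ->
  (forall N, \sum_(0 <= k < N) u k <= b) ->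
  (forall eps, 0 < eps -> exists N, b - eps <= \sum_(0 <= k < N) u k) ->
  (\sum_(0 <= k <oo) (u k)%:E = b%:E)%E.
Proof.
move=> u_ge0 sum_le sum_ge.
have uE_ge0 n : (0 <= n)%N -> true -> (0 <= (u n)%:E)%E by rewrite lee_fin.
set L := (\sum_(0 <= k <oo) (u k)%:E)%E.
have L_le : (L <= b%:E)%E.
  apply: (lime_le (is_cvg_nneseries uE_ge0)); apply: nearW => N.
  by rewrite sumEFin lee_fin.
have L_ge eps : 0 < eps -> ((b - eps)%:E <= L)%E.
  move=> /sum_ge[N bN]; apply: le_trans (nneseries_lim_ge N uE_ge0).
  by rewrite big_mkcond /= sumEFin lee_fin.
have L_fin : L = (fine L)%:E.
  by rewrite fineK // ge0_fin_numE ?nneseries_ge0 // (le_lt_trans L_le) ?ltry.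
rewrite L_fin; congr (_%:E); apply/le_anti/andP; split; first by rewrite -lee_fin -L_fin.
apply/ler_addgt0Pr => eps eps_gt0; rewrite -lerBlDr -lee_fin -L_fin.
exact: L_ge.
Qed.

(** * Mean hitting times from the first-step equations *)

Section HittingTime.
Variables (R : realType) (T : finType) (P : T -> T -> T -> R) (j : T).
Hypothesis P_ge0 : forall u v w, 0 <= P u v w.
Hypothesis P_sum1 : forall u v, \sum_w P u v w = 1.

Fixpoint walk_prob (u v : T) (s : seq T) : R :=
  if s is w :: s' then P u v w * walk_prob v w s' else 1.

(* The probability that j is first hit at time n by the chain whose current
   state is (u, v): previous position u, position v at time 0. *)
Definition hit_at n u v : R :=
  \sum_(s : n.-tuple T)
    walk_prob u v s * ((last v s == j) && all (fun x => x != j) (belast v s))%:R.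

Definition killed_step (F : T -> T -> R) u v : R :=
  (v != j)%:R * \sum_w P u v w * F v w.

Definition survival n : T -> T -> R := iter n killed_step (fun _ v => (v != j)%:R).

Lemma walk_prob_ge0 u v s : 0 <= walk_prob u v s.
Proof. by elim: s u v => [|w s IHs] u v /=; rewrite ?mulr_ge0. Qed.

Lemma hit_at_ge0 n u v : 0 <= hit_at n u v.
Proof. by rewrite sumr_ge0 // => s _; rewrite mulr_ge0 ?walk_prob_ge0. Qed.

Lemma hit_at0 u v : hit_at 0 u v = (v == j)%:R.
Proof. by rewrite /hit_at big_tuple0 /= mul1r andbT. Qed.

Lemma hit_atS n u v : hit_at n.+1 u v = killed_step (hit_at n) u v.
Proof.
rewrite /hit_at big_tupleS /killed_step big_distrr /=; apply: eq_bigr => w _.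
rewrite !big_distrr /=; apply: eq_bigr => t _ /=.
by case: (v != j); rewrite ?andbF /= ?mul0r ?mulr0 // mul1r mulrA.
Qed.

Lemma killed_stepD F G u v :
  killed_step (fun x y => F x y + G x y) u v = killed_step F u v + killed_step G u v.
Proof.
rewrite /killed_step -mulrDr -big_split /=; apply: congr1.
by apply: eq_bigr => w _; rewrite mulrDr.
Qed.

Lemma killed_stepB F G u v :
  killed_step (fun x y => F x y - G x y) u v = killed_step F u v - killed_step G u v.
Proof.
rewrite /killed_step -mulrBr -sumrB; congr (_ * _).
by apply: eq_bigr => w _; rewrite mulrBr.
Qed.

Lemma killed_stepZ c F u v :
  killed_step (fun x y => c * F x y) u v = c * killed_step F u v.
Proof.
rewrite /killed_step [RHS]mulrCA; congr (_ * _); rewrite big_distrr.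
by apply: eq_bigr => w _; rewrite mulrCA.
Qed.

Lemma killed_step_sum (I : Type) (r : seq I) (F : I -> T -> T -> R) u v :
  killed_step (fun x y => \sum_(k <- r) F k x y) u v = \sum_(k <- r) killed_step (F k) u v.
Proof.
elim: r => [|k r IHr].
  by rewrite big_nil /killed_step big1 ?mulr0 // => w _; rewrite big_nil mulr0.
rewrite big_cons -IHr -killed_stepD; congr killed_step.
by apply/funext => x; apply/funext => y; rewrite big_cons.
Qed.

Lemma killed_step1 u v : killed_step (fun _ _ => 1) u v = (v != j)%:R.
Proof. by rewrite /killed_step (eq_bigr (P u v)) ?P_sum1 ?mulr1 // => w _; rewrite mulr1. Qed.

Lemma hit_at_survival n u v : hit_at n.+1 u v = survival n u v - survival n.+1 u v.
Proof.
elim: n u v => [|n IHn] u v; rewrite hit_atS.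
  rewrite /= -(killed_step1 u) -killed_stepB; congr killed_step.
  apply/funext => x; apply/funext => y.
  by rewrite hit_at0; case: (y == j); rewrite ?subr0 ?subrr.
rewrite [in RHS]/survival !iterS -killed_stepB; congr killed_step.
by apply/funext => x; apply/funext => y; rewrite IHn.
Qed.

Lemma survival_ge0 n u v : 0 <= survival n u v.
Proof.
elim: n u v => [|n IHn] u v /=; first exact: ler0n.
by rewrite mulr_ge0 // sumr_ge0 // => w _; rewrite mulr_ge0.
Qed.

Lemma survival_decr m n u v : (m <= n)%N -> survival n u v <= survival m u v.
Proof.
move=> /subnK <-; elim: (n - m)%N => [|k IHk] //.
by rewrite addSn (le_trans _ IHk) // -subr_ge0 -hit_at_survival hit_at_ge0.
Qed.

Lemma sum_hit_at N u v : \sum_(0 <= k < N.+1) hit_at k u v = 1 - survival N u v.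
Proof.
elim: N => [|N IHN].
  by rewrite big_nat1 hit_at0 /=; case: (v == j); rewrite ?subrr ?subr0.
by rewrite big_nat_recr //= IHN hit_at_survival addrA subrK.
Qed.

Lemma sum_mul_hit_at N u v : \sum_(0 <= k < N.+1) k%:R * hit_at k u v =
  \sum_(0 <= m < N) survival m u v - N%:R * survival N u v.
Proof.
elim: N => [|N IHN]; first by rewrite big_nat1 big_geq // !mul0r subrr.
rewrite big_nat_recr //= IHN hit_at_survival big_nat_recr //= -[N.+1]addn1 natrD.
lra.
Qed.

Section FirstStep.
Variables (S : T -> T -> bool) (tau : T -> T -> R).
Hypothesis S_step : forall u v w, S u v -> v != j -> P u v w != 0 -> S v w.
Hypothesis tau_ge0 : forall u v, S u v -> 0 <= tau u v.
Hypothesis tau_first_step : forall u v, S u v ->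
  tau u v = (v != j)%:R * (1 + \sum_w P u v w * tau v w).

Lemma killed_step_le_on F G u v : S u v -> (forall w, S v w -> F v w <= G v w) ->
  killed_step F u v <= killed_step G u v.
Proof.
rewrite /killed_step => Suv FG; case vj: (v != j); last by rewrite !mul0r.
rewrite !mul1r; apply: ler_sum => w _.
have [->|P_neq0] := eqVneq (P u v w) 0; first by rewrite !mul0r.
by rewrite ler_wpM2l // FG // (S_step Suv) ?vj.
Qed.

Lemma killed_step_eq_on F G u v : S u v -> (forall w, S v w -> F v w = G v w) ->
  killed_step F u v = killed_step G u v.
Proof. by move=> Suv FG; apply/le_anti; rewrite !killed_step_le_on // => w /FG ->. Qed.

Definition remainder N : T -> T -> R := iter N killed_step tau.

Lemma tau_decomp N u v : S u v ->
  tau u v = \sum_(0 <= k < N) survival k u v + remainder N u v.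
Proof.
elim: N u v => [|N IHN] u v Suv; first by rewrite big_geq // add0r.
have {1}-> : tau u v = survival 0 u v + killed_step tau u v.
  by rewrite tau_first_step // mulrDr mulr1.
rewrite (killed_step_eq_on
    (G := fun x y => \sum_(0 <= k < N) survival k x y + remainder N x y)) //.
  by rewrite killed_stepD killed_step_sum big_nat_recl // addrA.
by move=> w Svw; apply: IHN.
Qed.

Lemma remainder_ge0 N u v : S u v -> 0 <= remainder N u v.
Proof.
elim: N u v => [|N IHN] u v Suv; first exact: tau_ge0.
apply: le_trans (killed_step_le_on (F := fun _ _ => 0) Suv (fun w Svw => IHN v w Svw)).
by rewrite /killed_step big1 ?mulr0 // => w _; rewrite mulr0.
Qed.

Definition tau_bound : R := \sum_(p : T * T) `|tau p.1 p.2|.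

Lemma remainder_le N u v : S u v -> remainder N u v <= tau_bound * survival N u v.
Proof.
elim: N u v => [|N IHN] u v Suv; rewrite /remainder /survival /=.
  case: eqVneq Suv => [-> Sj|_ Suv] /=.
    by rewrite tau_first_step // eqxx !mul0r mulr0.
  rewrite mulr1 /tau_bound (bigD1 (u, v)) //= (le_trans (ler_norm _)) // lerDl.
  by rewrite sumr_ge0.
rewrite -killed_stepZ; exact: killed_step_le_on Suv (fun w Svw => IHN v w Svw).
Qed.

Lemma sum_survival_le N u v : S u v -> \sum_(0 <= k < N) survival k u v <= tau u v.
Proof. by move=> Suv; rewrite (tau_decomp N Suv) lerDl remainder_ge0. Qed.

Lemma survival_vanish c eps u v : S u v -> 0 <= c -> 0 < eps ->
  exists N, forall n, (N <= n)%N -> c * survival n u v <= eps.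
Proof.
move=> Suv c_ge0 eps_gt0; exists (Num.truncn (c * tau u v / eps)).+1 => n Nn.
have n_large : c * tau u v / eps < n%:R.
  by rewrite (lt_le_trans (truncnS_gt _)) // ler_nat.
have n_surv : n%:R * survival n u v <= tau u v.
  apply: le_trans (sum_survival_le n Suv).
  rewrite mulr_natl -[X in _ *+ X](subn0 n) -sumr_const_nat ler_sum_nat // => k /andP[_ kn].
  by rewrite survival_decr // ltnW.
have n_gt0 : 0 < n%:R :> R by rewrite ltr0n (leq_trans _ Nn).
rewrite ltr_pdivrMr // in n_large.
rewrite -(ler_pM2l n_gt0) mulrCA (le_trans (ler_wpM2l c_ge0 n_surv)) //.
exact: ltW.
Qed.

Lemma hit_at_series_eq1 u v : S u v -> (\sum_(0 <= n <oo) (hit_at n u v)%:E = 1%:E)%E.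
Proof.
move=> Suv; apply: nneseries_eq_sup => [n|[|N]|eps eps_gt0].
- exact: hit_at_ge0.
- by rewrite big_geq.
- by rewrite sum_hit_at gerBl survival_ge0.
have [N qN] := survival_vanish Suv ler01 eps_gt0.
by exists N.+1; rewrite sum_hit_at lerB // -[survival _ _ _]mul1r qN.
Qed.

Lemma hit_at_mean u v : S u v ->
  (\sum_(0 <= n <oo) (n%:R * hit_at n u v)%:E = (tau u v)%:E)%E.
Proof.
move=> Suv; apply: nneseries_eq_sup => [n|[|N]|eps eps_gt0].
- by rewrite mulr_ge0 ?hit_at_ge0.
- by rewrite big_geq ?tau_ge0.
- rewrite sum_mul_hit_at (le_trans _ (sum_survival_le N Suv)) // gerBl.
  by rewrite mulr_ge0 ?survival_ge0.
have eps2_gt0 : 0 < eps / 2 by rewrite divr_gt0.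
have bound_ge0 : 0 <= tau_bound by rewrite sumr_ge0.
have [M rem_small] := survival_vanish Suv bound_ge0 eps2_gt0.
have [N' tail_small] := survival_vanish Suv (ler0n _ M) eps2_gt0.
pose N := maxn M N'; exists N.+1.
have MN : (M <= N)%N by rewrite leq_maxl.
have tail_ge : survival N u v *+ (N - M) <= \sum_(M <= k < N) survival k u v.
  by rewrite -sumr_const_nat ler_sum_nat // => k /andP[_ kN]; rewrite survival_decr // ltnW.
rewrite -mulr_natl natrB // in tail_ge.
have := rem_small M (leqnn M); have := tail_small N (leq_maxr M N').
have := remainder_le M Suv; have := tau_decomp M Suv.
rewrite sum_mul_hit_at (big_cat_nat (leq0n M) MN) /=.
lra.
Qed.

End FirstStep.
End HittingTime.

(** * The begrudgingly backtracking walk *)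

Section BBRW.
Variables (R : realType) (T : finType) (e : rel T).

Lemma bb_step_ge0 u v w : 0 <= bb_step R e u v w.
Proof. by rewrite /bb_step; case: ifP => _; rewrite ?divr_ge0 ?ler0n. Qed.

Lemma sum_bb_step u v (F : T -> R) : \sum_w bb_step R e u v w * F w =
  if #|nbhd e v :\ u| == 0%N then F u
  else (\sum_(w in nbhd e v :\ u) F w) / #|nbhd e v :\ u|%:R.
Proof.
rewrite /bb_step; case: ifP => _.
  by rewrite (bigD1 u) //= eqxx mul1r big1 ?addr0 // => w /negbTE ->; rewrite mul0r.
rewrite big_distrl /= [RHS]big_mkcond /=; apply: eq_bigr => w _.
by case: (w \in _); rewrite ?mul1r ?mul0r // mulrC.
Qed.

Lemma bb_step_sum1 u v : \sum_w bb_step R e u v w = 1.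
Proof.
have := sum_bb_step u v (fun _ => 1).
rewrite (eq_bigr (bb_step R e u v)) => [->|w _]; last exact: mulr1.
case: ifP => [//|/negbT A0]; rewrite sumr_const divff //.
by rewrite pnatr_eq0.
Qed.

Lemma tail_prob_walk u v s : tail_prob R e u v s = walk_prob (bb_step R e) u v s.
Proof. by elim: s u v => [|w s IHs] u v //=; rewrite IHs. Qed.

Lemma hit_prob_hit_at i k n : irreflexive e -> (0 < deg e i)%N ->
  hit_prob R e i k n = hit_at (bb_step R e) k n i i.
Proof.
move=> e_irr deg_gt0; apply: eq_bigr => s _; congr (_ * _).
case: s => -[|x s] //= _; rewrite tail_prob_walk; congr (_ * _).
rewrite /bb_step; have -> : nbhd e i :\ i = nbhd e i.
  by apply/setP => y; rewrite !inE; case: eqP => // ->; rewrite e_irr.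
by rewrite eqn0Ngt deg_gt0 /= inE.
Qed.

End BBRW.

(* For the children A of a vertex v, with x c = E_c and X = E_v: the sum over A
   of excursion c + climb c. *)
Lemma sum_excursion_climb (R : numFieldType) (I : finType) (A : {pred I})
    (x : I -> R) (X : R) :
  X = \sum_(c in A) (1 + x c) ->
  \sum_(c in A) ((1 + 2 * x c) + (#|A|%:R * (1 + 2 * X) - (1 + 2 * x c)) / (#|A|%:R + 1)) =
    2 * #|A|%:R * X.
Proof.
set m := #|A|%:R => hX; have m1_neq0 : m + 1 != 0 by rewrite /m natr1 pnatr_eq0.
have sum_exc : \sum_(c in A) (1 + 2 * x c) = 2 * X - m.
  rewrite hX /m mulr_sumr -sumr_const -sumrB.
  by apply: eq_bigr => c _; ring.
rewrite (eq_bigr (fun c => (m * (1 + 2 * X) + m * (1 + 2 * x c)) / (m + 1))) => [|c _].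
  rewrite -mulr_suml big_split /= -!mulr_sumr sum_exc sumr_const -[_ *+ _]mulr_natl -/m.
  by field.
by field.
Qed.

Lemma card_bigcup_disjoint (I T : finType) (P : {pred I}) (F : I -> {set T}) :
  {in P &, forall i k, i != k -> [disjoint F i & F k]} ->
  #|\bigcup_(i in P) F i| = (\sum_(i in P) #|F i|)%N.
Proof.
move=> disjF; pose G i := [set x in F i | i \in P].
have -> : \bigcup_(i in P) F i = \bigcup_i G i.
  rewrite big_mkcond; apply: eq_bigr => i _; apply/setP => x.
  by rewrite /G !inE; case: (i \in P); rewrite ?andbT ?andbF ?inE.
have GF i : G i \subset F i by apply/fintype.subsetP => x /[!inE] /andP[].
have G0 i (A : {set T}) : i \notin P -> [disjoint G i & A].
  move=> Pi; rewrite finset.disjoints_subset; apply/fintype.subsetP => x.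
  by rewrite !inE (negbTE Pi) andbF.
rewrite -sum1_card partition_disjoint_bigcup => [|i k ik]; last first.
  have [Pi|Pi] := boolP (i \in P); last exact: G0.
  have [Pk|Pk] := boolP (k \in P); last by rewrite disjoint_sym G0.
  exact: disjointW (GF i) (GF k) (disjF i k Pi Pk ik).
rewrite [RHS]big_mkcond; apply: eq_bigr => i _; rewrite sum1_card.
case: ifP => Pi; first by apply: eq_card => x; rewrite !inE Pi andbT.
by apply: eq_card0 => x; rewrite !inE Pi andbF.
Qed.

Lemma set2_neq (T : finType) (x y a b : T) :
  a \notin [set x; y] -> [set x; y] != [set a; b].
Proof. by apply: contraNneq => ->; rewrite !inE eqxx. Qed.

Lemma set2_neqr (T : finType) (x y a b : T) :
  b \notin [set x; y] -> [set x; y] != [set a; b].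
Proof. by rewrite [[set a; b]]finset.setUC; apply: set2_neq. Qed.

(* The first-step equation for the move u -> v, with m = d_v - 1, E = E_v,
   x = excursion u and a = ascent v. *)
Lemma climb_step_identity (R : numFieldType) (m E x a : R) : 0 < m ->
  (m * (1 + 2 * E) - x) / (m + 1) + a =
  1 + (a + m * (2 * E + a) - (x + (m * (1 + 2 * E) - x) / (m + 1) + a)) / m.
Proof. by move=> m_gt0; field; rewrite ?gt_eqF // ltr_wpDr. Qed.

(** * Deleting an edge of a tree *)

Section Tree.
Variables (T : finType) (e : rel T).
Hypothesis e_sym : symmetric e.
Hypothesis e_irr : irreflexive e.
Hypothesis e_connected : forall x y : T, connect e x y.
Hypothesis e_acyclic : forall c : seq T, uniq c -> (3 <= size c)%N -> ~~ cycle e c.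

Lemma del_edgeC a b : del_edge e a b =2 del_edge e b a.
Proof. by move=> x y; rewrite /del_edge [[set b; a]]finset.setUC. Qed.

Lemma del_edge_sym a b : symmetric (del_edge e a b).
Proof. by move=> x y; rewrite /del_edge e_sym [[set y; x]]finset.setUC. Qed.

Lemma del_edge_sub a b : subrel (del_edge e a b) e.
Proof. by move=> x y /andP[]. Qed.

Lemma comp_del_refl a b : a \in comp_del e a b.
Proof. by rewrite inE connect0. Qed.

Lemma comp_del_step a b x y :
  x \in comp_del e a b -> e x y -> [set x; y] != [set a; b] -> y \in comp_del e a b.
Proof.
rewrite !inE => ax xy xy_ab; apply: connect_trans ax (connect1 _).
by rewrite /del_edge xy.
Qed.

Lemma path_avoid_del a b x p : path e x p -> a \notin x :: p -> path (del_edge e a b) x p.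
Proof.
elim: p x => [|y p IHp] x //= /andP[exy pyp].
rewrite in_cons negb_or => /andP[ax ayp]; rewrite /del_edge exy IHp // andbT set2_neq //.
by move: ayp; rewrite !inE !negb_or ax => /andP[-> _].
Qed.

Lemma path_avoid_comp_del v t p :
  path e t p -> v \notin t :: p -> last t p \in comp_del e t v.
Proof.
move=> tp vp; rewrite inE; apply/connectP; exists p => //.
by rewrite (eq_path (del_edgeC t v)) path_avoid_del.
Qed.

Lemma notin_comp_del a b : e a b -> b \notin comp_del e a b.
Proof.
move=> eab; apply/negP; rewrite inE => /connectP[p pp lp].
case: (shortenP pp) lp => -[|c [|d p']] pp' up' _ //= lp.
- by move: eab; rewrite lp e_irr.
- by move: pp'; rewrite /= -lp /del_edge eqxx andbF.
- have /= /and3P[eac ecd edp] := sub_path (@del_edge_sub a b) pp'.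
  by move: (e_acyclic up' isT); rewrite /= rcons_path eac ecd edp -lp [e b a]e_sym eab.
Qed.

Lemma comp_del_disjoint a b x : e a b -> x \in comp_del e a b -> x \notin comp_del e b a.
Proof.
rewrite !inE => eab ax; apply/negP => bx.
have xb : connect (del_edge e a b) x b.
  by rewrite (sym_connect_sym (@del_edge_sym a b)) (eq_connect (del_edgeC a b)).
by move: (notin_comp_del eab); rewrite inE (connect_trans ax xb).
Qed.

Lemma comp_del_sub v u c : e v u -> e v c -> c != u ->
  {subset comp_del e c v <= comp_del e v u}.
Proof.
move=> evu evc cu x; rewrite inE => /connectP[p pp ->].
have v_off : v \notin c :: p.
  apply/negP => /(path_connect pp) cv.
  by move: (@notin_comp_del c v); rewrite e_sym inE cv => /(_ evc).
have vc : [set v; c] != [set v; u].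
  rewrite set2_neqr // !inE negb_or [u == c]eq_sym cu andbT.
  by apply: contraTneq evu => ->; rewrite e_irr.
have := comp_del_step (comp_del_refl v u) evc vc.
rewrite !inE => /connect_trans; apply; apply/connectP; exists p => //.
exact: path_avoid_del (sub_path (@del_edge_sub c v) pp) v_off.
Qed.

Lemma nbr_notin_comp_del v c : e v c -> v \notin comp_del e c v.
Proof. by rewrite e_sym; apply: notin_comp_del. Qed.

Lemma comp_del_nbr_disjoint v c c' x : e v c -> e v c' -> c != c' ->
  x \in comp_del e c v -> x \notin comp_del e c' v.
Proof. by move=> evc evc' cc' /(comp_del_sub evc' evc cc'); apply: comp_del_disjoint. Qed.

Lemma comp_del_split v u x : e v u -> x \in comp_del e v u -> x != v ->
  exists2 c, c \in nbhd e v :\ u & x \in comp_del e c v.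
Proof.
move=> evu; rewrite inE => /connectP[p pp ->].
case: (shortenP pp) => -[|c p'] pp' up' _ /=; first by rewrite eqxx.
move: pp' up' => /= /andP[/andP[evc vc] cp'] /andP[vp' _] _.
exists c; last exact: path_avoid_comp_del (sub_path (@del_edge_sub v u) cp') vp'.
by rewrite !inE evc andbT; apply: contraNneq vc => ->.
Qed.

Lemma comp_del_cover a b x :
  e a b -> (x \in comp_del e a b) || (x \in comp_del e b a).
Proof.
move=> eab; have /connectP[p pp ->] := e_connected a x.
case: (shortenP pp) => -[|c p'] pp' up' _ /=; first by rewrite comp_del_refl.
move: pp' up' => /= /andP[eac cp'] /andP[ap' _].
have xc := path_avoid_comp_del cp' ap'.
have [cb|cb] := eqVneq c b; first by rewrite -cb xc orbT.
by rewrite (comp_del_sub eab eac cb xc).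
Qed.

Lemma comp_edgesP a b E : reflect
  (exists x y, [/\ E = [set x; y], x \in comp_del e a b, y \in comp_del e a b
                 & del_edge e a b x y])
  (E \in comp_edges e a b).
Proof.
apply: (iffP imsetP) => [[[x y]]|[x [y [-> xC yC dxy]]]].
  by rewrite inE /= => /and3P[xC yC dxy] ->; exists x, y.
by exists (x, y); rewrite // inE /= xC yC dxy.
Qed.

Lemma comp_edges_sub a b E : E \in comp_edges e a b -> E \subset comp_del e a b.
Proof.
case/comp_edgesP => x [y [-> xC yC _]].
by apply/fintype.subsetP => z; rewrite in_set2 => /orP[] /eqP ->.
Qed.

Lemma nbr_edges_side v c E : e v c -> E \in [set v; c] |: comp_edges e c v ->
  (exists x, x \in E :\ v) /\ E :\ v \subset comp_del e c v.
Proof.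
move=> evc /setU1P[->|Ec].
  split.
    exists c; rewrite !inE eqxx orbT andbT eq_sym.
    by apply: contraTneq evc => ->; rewrite e_irr.
  apply/fintype.subsetP => z; rewrite in_setD1 in_set2 => /andP[zv /orP[/eqP zv'|/eqP ->]].
    by rewrite zv' eqxx in zv.
  exact: comp_del_refl.
have Esub := comp_edges_sub Ec.
have vE : v \notin E by apply: contra (nbr_notin_comp_del evc); apply: (fintype.subsetP Esub).
case/comp_edgesP: Ec Esub vE => x [y [-> _ _ _]] Esub vE; split.
  by exists x; rewrite !inE eqxx andbT; apply: contraNneq vE => ->; rewrite !inE eqxx.
exact: fintype.subset_trans (subsetDl _ _) Esub.
Qed.

Lemma comp_edges_nbr v u c : e v u -> c \in nbhd e v :\ u ->
  [set v; c] |: comp_edges e c v \subset comp_edges e v u.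
Proof.
move=> evu /setD1P[cu]; rewrite inE => evc.
have uv : u != v by apply: contraTneq evu => ->; rewrite e_irr.
have vc_vu : [set v; c] != [set v; u].
  by rewrite set2_neqr // in_set2 negb_or uv [u == c]eq_sym cu.
have sub := comp_del_sub evu evc cu.
apply/fintype.subsetP => E /setU1P[->|Ec].
  apply/comp_edgesP; exists v, c; split => //; first exact: comp_del_refl.
    exact: comp_del_step (comp_del_refl v u) evc vc_vu.
  by rewrite /del_edge evc.
have /fintype.subsetP Esub := comp_edges_sub Ec.
case/comp_edgesP: Ec Esub => x [y [-> xC yC /andP[exy _]]] Esub.
have vxy : v \notin [set x; y] by apply: contra (nbr_notin_comp_del evc); apply: Esub.
apply/comp_edgesP; exists x, y; split; [by [] | exact: sub | exact: sub |].
by rewrite /del_edge exy set2_neq.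
Qed.

Lemma comp_edges_split v u E : e v u -> E \in comp_edges e v u ->
  exists2 c, c \in nbhd e v :\ u & E \in [set v; c] |: comp_edges e c v.
Proof.
move=> evu /comp_edgesP[x [y [-> xC yC /andP[exy _]]]].
have neq_u z : z \in comp_del e v u -> z != u.
  by apply: contraTneq => ->; apply: notin_comp_del.
have [xv|xv] := eqVneq x v.
  by exists y; [rewrite !inE neq_u // -xv exy | rewrite xv setU11].
have [yv|yv] := eqVneq y v.
  exists x; first by rewrite !inE neq_u // -yv e_sym exy.
  by rewrite yv [[set x; v]]finset.setUC setU11.
have [c cN xc] := comp_del_split evu xC xv.
have evc : e v c by move: cN; rewrite !inE => /andP[].
have xy_cv : [set x; y] != [set c; v].
  by rewrite set2_neqr // in_set2 negb_or ![v == _]eq_sym xv yv.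
exists c => //; apply/setU1P; right; apply/comp_edgesP; exists x, y; split => //.
  exact: comp_del_step xc exy xy_cv.
by rewrite /del_edge exy.
Qed.

Lemma comp_edges_rec v u : e v u ->
  comp_edges e v u = \bigcup_(c in nbhd e v :\ u) ([set v; c] |: comp_edges e c v).
Proof.
move=> evu; apply/setP => E; apply/idP/bigcupP => [/(comp_edges_split evu)[c]|[c cN]].
  by exists c.
exact/fintype.subsetP/comp_edges_nbr.
Qed.

Lemma card_comp_edges v u : e v u ->
  #|comp_edges e v u| = (\sum_(c in nbhd e v :\ u) (1 + #|comp_edges e c v|))%N.
Proof.
move=> evu; rewrite comp_edges_rec // card_bigcup_disjoint => [|c c' cN c'N cc'].
  apply: eq_bigr => c cN; rewrite cardsU1; congr (_ + _)%N.
  have evc : e v c by move: cN; rewrite !inE => /andP[].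
  apply/eqP; rewrite eqb1; apply: contra (nbr_notin_comp_del evc) => /comp_edges_sub.
  by move/fintype.subsetP; apply; rewrite !inE eqxx.
have nbr z : z \in nbhd e v :\ u -> e v z by rewrite !inE => /andP[].
rewrite finset.disjoints_subset; apply/fintype.subsetP => E Ec; rewrite inE; apply/negP => Ec'.
have [[x xE] /fintype.subsetP xc] := nbr_edges_side (nbr c cN) Ec.
have [_ /fintype.subsetP xc'] := nbr_edges_side (nbr c' c'N) Ec'.
by move: (comp_del_nbr_disjoint (nbr c cN) (nbr c' c'N) cc' (xc x xE)); rewrite xc'.
Qed.

Section Rooted.
Variable j : T.

(* The neighbour of v on the side of j, with the junk value parent j = j. *)
Definition parent v : T := odflt j [pick t in nbhd e v | j \in comp_del e t v].

Lemma parent_spec v : v != j -> e v (parent v) /\ j \in comp_del e (parent v) v.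
Proof.
move=> vj; rewrite /parent; case: pickP => [t /andP[] /[!inE] //|no_t].
have /connectP[p pp jp] := e_connected v j.
case: (shortenP pp) jp => -[|t p'] pp' up' _ /= jp; first by rewrite jp eqxx in vj.
move: pp' up' => /= /andP[evt tp'] /andP[vp' _].
by move: (no_t t); rewrite jp (path_avoid_comp_del tp' vp') inE evt.
Qed.

Lemma parent_eq v t : e v t -> j \in comp_del e t v -> parent v = t.
Proof.
move=> evt jt; have vj : v != j by apply: contraTneq jt => <-; apply: nbr_notin_comp_del.
have [evp jp] := parent_spec vj; apply/eqP; apply: contraTT jt => pt.
exact: comp_del_nbr_disjoint evp evt pt jp.
Qed.

Lemma parent_root : parent j = j.
Proof.
rewrite /parent; case: pickP => [t /andP[ejt jt]|//].
by rewrite inE in ejt; rewrite (negbTE (nbr_notin_comp_del ejt)) in jt.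
Qed.

Lemma parent_nbr v c : e v c -> parent v != c -> parent c = v.
Proof.
move=> evc pvc; apply: parent_eq; first by rewrite e_sym.
have ecv : e c v by rewrite e_sym.
case/orP: (comp_del_cover j ecv) => // jc.
by rewrite (parent_eq evc jc) eqxx in pvc.
Qed.

Lemma parent_parent v : parent v != j -> parent (parent v) != v.
Proof.
move=> pj; have vj : v != j by apply: contraNneq pj => ->; rewrite parent_root.
have [evp jp] := parent_spec vj; have [_ jpp] := parent_spec pj.
apply: contraTneq jp => ppv; rewrite ppv in jpp.
exact: comp_del_disjoint evp jpp.
Qed.

Lemma parent_edge_neq u a : parent u != j -> a != u ->
  [set u; parent u] != [set a; parent a].
Proof.
move=> pj au; apply/negP => /eqP E.
have : a \in [set u; parent u] by rewrite E setU11.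
rewrite in_set2 (negbTE au) /= => /eqP ap.
have : parent a \in [set u; parent u] by rewrite E in_set2 eqxx orbT.
rewrite in_set2 -ap => /orP[/eqP pau|/eqP paa].
  by move: (parent_parent pj); rewrite -ap pau eqxx.
have aj : a != j by rewrite ap.
have [eap _] := parent_spec aj.
by rewrite paa e_irr in eap.
Qed.

Definition children v : {set T} := nbhd e v :\ parent v.

Lemma children_parent v c : c \in children v -> parent c = v.
Proof. by rewrite !inE => /andP[cp evc]; apply: parent_nbr; rewrite // eq_sym. Qed.

Lemma mem_children u : parent u != j -> u \in children (parent u).
Proof.
move=> pj; have uj : u != j by apply: contraNneq pj => ->; rewrite parent_root.
have [eup _] := parent_spec uj.
by rewrite !inE e_sym eup andbT eq_sym parent_parent.
Qed.

Lemma nbhd_children v : v != j -> nbhd e v = parent v |: children v.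
Proof. by move=> vj; rewrite finset.setD1K // inE; case: (parent_spec vj). Qed.

Lemma deg_children v : v != j -> deg e v = #|children v|.+1.
Proof. by move=> vj; rewrite /deg (nbhd_children vj) cardsU1 !inE eqxx. Qed.

Definition subtree_edges v : nat := #|comp_edges e v (parent v)|.

Lemma subtree_edges_rec v : v != j ->
  subtree_edges v = (\sum_(c in children v) (1 + subtree_edges c))%N.
Proof.
move=> vj; have [evp _] := parent_spec vj.
rewrite {1}/subtree_edges (card_comp_edges evp).
by apply: eq_bigr => c /children_parent pc; rewrite /subtree_edges pc.
Qed.

Definition ancestors v : {set T} :=
  [set a | (parent a != j) && (v \in comp_del e a (parent a))].

Lemma in_ancestors v a :
  (a \in ancestors v) = (parent a != j) && (v \in comp_del e a (parent a)).
Proof. exact: finset.in_set. Qed.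

Lemma ancestors_root v a : parent v = j -> a \notin ancestors v.
Proof.
move=> pv; rewrite in_ancestors; apply/andP => -[paj va].
have aj : a != j by apply: contraNneq paj => ->; rewrite parent_root.
have [eap jpa] := parent_spec aj.
have ja : j \in comp_del e a (parent a).
  have [<-|vj] := eqVneq v j => //.
  have [evj _] := parent_spec vj; rewrite pv in evj.
  apply: comp_del_step va evj _.
  by rewrite eq_sym set2_neqr // in_set2 negb_or ![j == _]eq_sym aj paj.
by move: (comp_del_disjoint eap ja); rewrite jpa.
Qed.

Lemma ancestors_parent u : parent u != j ->
  ancestors u = u |: ancestors (parent u).
Proof.
move=> pj; have uj : u != j by apply: contraNneq pj => ->; rewrite parent_root.
have [eup _] := parent_spec uj.
apply/setP => a; rewrite in_setU1 !in_ancestors.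
have [->|au] := eqVneq a u; first by rewrite pj comp_del_refl.
have [paj|] //= := boolP (parent a != j).
have ne := parent_edge_neq pj au.
have epu : e (parent u) u by rewrite e_sym.
apply/idP/idP => ua; first exact: comp_del_step ua eup ne.
by apply: comp_del_step ua epu _; rewrite [[set parent u; u]]finset.setUC.
Qed.

Lemma notin_ancestors_parent u : u \notin ancestors (parent u).
Proof.
rewrite in_ancestors negb_and orbC.
have [->|uj] := eqVneq u j; first by rewrite parent_root eqxx orbT.
by case: (parent_spec uj) => eup _; rewrite notin_comp_del.
Qed.

(** * Explicit mean hitting times on a tree *)

Section HitTimes.
Variable R : realType.

(* excursion c is the mean time from the move parent c -> c to the move back,
   climb a the mean time from the move a -> parent a to the move
   parent a -> parent (parent a), and ascent v the mean time from the move
   v -> parent v to the hitting of j. *)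
Definition excursion v : R := 1 + 2 * (subtree_edges v)%:R.

Definition climb a : R :=
  let b := parent a in (((deg e b)%:R - 1) * excursion b - excursion a) / (deg e b)%:R.

Definition ascent v : R := \sum_(a in ancestors v) climb a.

Definition edge_time u v : R :=
  if v == j then 0 else if parent u == v then ascent u else excursion v + ascent v.

(* The state (u, v) is the move u -> v; the state (v, v) is a walk started at v,
   as bb_step v v is uniform on the neighbours of v. *)
Definition hit_time u v : R :=
  if v == j then 0
  else if u == v then 1 + (\sum_(w in nbhd e v) edge_time v w) / (deg e v)%:R
  else edge_time u v.

Lemma ascent_root v : parent v = j -> ascent v = 0.
Proof. by move=> pv; rewrite /ascent big_pred0 // => a; apply/negbTE/ancestors_root. Qed.

Lemma ascent_parent u : parent u != j -> ascent u = climb u + ascent (parent u).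
Proof.
by move=> pj; rewrite /ascent ancestors_parent // big_setU1 //= notin_ancestors_parent.
Qed.

Lemma edge_time_parent v : v != j -> edge_time v (parent v) = ascent v.
Proof.
move=> vj; rewrite /edge_time eqxx.
by case: eqP => [pj|//]; rewrite ascent_root.
Qed.

Lemma edge_time_child v c : v != j -> c \in children v ->
  edge_time v c = excursion c + climb c + ascent v.
Proof.
move=> vj cv; have pc := children_parent cv.
have cj : c != j by apply: contraNneq vj => cj; rewrite -pc cj parent_root.
move: cv; rewrite /edge_time (negbTE cj) !inE => /andP[cp _].
by rewrite eq_sym (negbTE cp) ascent_parent pc // addrA.
Qed.

Lemma children_card_gt0 v u : u \in children v -> 0 < #|children v|%:R :> R.
Proof. by move=> uv; rewrite ltr0n card_gt0; apply/set0Pn; exists u. Qed.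

Lemma deg_childrenR v : v != j -> (deg e v)%:R = #|children v|%:R + 1 :> R.
Proof. by move=> vj; rewrite deg_children // -addn1 natrD. Qed.

Lemma sum_edge_time_children v : v != j ->
  \sum_(c in children v) edge_time v c =
    #|children v|%:R * (2 * (subtree_edges v)%:R + ascent v).
Proof.
move=> vj.
have E_v : (subtree_edges v)%:R = \sum_(c in children v) (1 + (subtree_edges c)%:R) :> R.
  by rewrite subtree_edges_rec // natr_sum; apply: eq_bigr => c _; rewrite natrD.
transitivity (\sum_(c in children v) ((1 + 2 * (subtree_edges c)%:R +
    (#|children v|%:R * (1 + 2 * (subtree_edges v)%:R) - (1 + 2 * (subtree_edges c)%:R)) /
    (#|children v|%:R + 1)) + ascent v)).
  apply: eq_bigr => c cv; rewrite edge_time_child //.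
  by rewrite /climb (children_parent cv) deg_childrenR // addrK.
rewrite big_split /= (sum_excursion_climb E_v) sumr_const -mulr_natl.
ring.
Qed.

Lemma sum_edge_time_nbhd v : v != j ->
  \sum_(w in nbhd e v) edge_time v w =
    ascent v + #|children v|%:R * (2 * (subtree_edges v)%:R + ascent v).
Proof.
move=> vj; rewrite (nbhd_children vj) big_setU1 /=; last by rewrite !inE eqxx.
by rewrite edge_time_parent // sum_edge_time_children.
Qed.

Lemma hit_time_edge u v : u != v -> hit_time u v = edge_time u v.
Proof. by move=> uv; rewrite /hit_time /edge_time (negbTE uv); case: (v == j). Qed.

Lemma hit_time_diag v : v != j ->
  hit_time v v =
    1 + ascent v + 2 * (subtree_edges v)%:R * (((deg e v)%:R - 1) / (deg e v)%:R).
Proof.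
move=> vj; rewrite /hit_time (negbTE vj) eqxx (sum_edge_time_nbhd vj) (deg_childrenR vj).
by field; rewrite natr1 pnatr_eq0.
Qed.

Lemma edge_time_up u v : parent u = v -> v != j ->
  edge_time u v = 1 + (\sum_(w in nbhd e v :\ u) edge_time v w) / #|nbhd e v :\ u|%:R.
Proof.
move=> pu vj; have pj : parent u != j by rewrite pu.
have uj : u != j by apply: contraNneq pj => ->; rewrite parent_root.
have uv : u \in children v by rewrite -pu mem_children.
have u_nbhd : u \in nbhd e v by move: uv => /setD1P[].
have card_nbhd : #|nbhd e v :\ u| = #|children v|.
  by apply: succn_inj; rewrite -deg_children // /deg (cardsD1 u (nbhd e v)) u_nbhd.
have sum_nbhd : \sum_(w in nbhd e v :\ u) edge_time v w =
    ascent v + #|children v|%:R * (2 * (subtree_edges v)%:R + ascent v) -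
    (excursion u + climb u + ascent v).
  rewrite -(sum_edge_time_nbhd vj) -(edge_time_child vj uv) (big_setD1 u u_nbhd) /=.
  by rewrite addrC addrK.
rewrite card_nbhd sum_nbhd -{1}pu (edge_time_parent uj) (ascent_parent pj) pu.
rewrite /climb pu (deg_childrenR vj) addrK.
exact: climb_step_identity (children_card_gt0 uv).
Qed.

Lemma edge_time_down v : v != j ->
  edge_time (parent v) v =
    1 + (if #|children v| == 0%N then edge_time v (parent v)
         else (\sum_(w in children v) edge_time v w) / #|children v|%:R).
Proof.
move=> vj; have ppv : parent (parent v) != v.
  have [->|pj] := eqVneq (parent v) j; last exact: parent_parent.
  by rewrite parent_root eq_sym.
rewrite {1}/edge_time (negbTE vj) (negbTE ppv) (edge_time_parent vj) /excursion.
case: eqP => [/card0_eq c0|/eqP c0].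
  by rewrite subtree_edges_rec // big_pred0 // mulr0 addr0.
by rewrite sum_edge_time_children // [_ * (2 * _ + _)]mulrC mulfK ?pnatr_eq0 // addrA.
Qed.

Lemma sum_bb_hit_time u v : u != v ->
  \sum_w bb_step R e u v w * hit_time v w =
    if #|nbhd e v :\ u| == 0%N then edge_time v u
    else (\sum_(w in nbhd e v :\ u) edge_time v w) / #|nbhd e v :\ u|%:R.
Proof.
move=> uv; have vu : v != u by rewrite eq_sym.
rewrite sum_bb_step (hit_time_edge vu); congr (if _ then _ else _ / _).
apply: eq_bigr => w /setD1P[_]; rewrite inE => evw.
by rewrite hit_time_edge //; apply: contraTneq evw => ->; rewrite e_irr.
Qed.

Lemma hit_time_first_step u v : (u == v) || e u v ->
  hit_time u v = (v != j)%:R * (1 + \sum_w bb_step R e u v w * hit_time v w).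
Proof.
move=> Suv; have [->|vj] := eqVneq v j; first by rewrite /hit_time eqxx mul0r.
rewrite mul1r; case/orP: Suv => [/eqP ->|euv].
  have nbhd_v : nbhd e v :\ v = nbhd e v.
    by apply/setP => w; rewrite !inE; case: eqP => // ->; rewrite e_irr.
  rewrite sum_bb_step nbhd_v -/(deg e v) deg_children //=.
  rewrite (eq_bigr (edge_time v)) => [|w]; last first.
    rewrite inE => evw; rewrite hit_time_edge //.
    by apply: contraTneq evw => ->; rewrite e_irr.
  by rewrite /hit_time (negbTE vj) eqxx -deg_children.
have uv : u != v by apply: contraTneq euv => ->; rewrite e_irr.
rewrite (hit_time_edge uv) (sum_bb_hit_time uv).
have [pu|puv] := eqVneq (parent u) v.
  have pj : parent u != j by rewrite pu.
  have uv' : u \in children v by rewrite -pu mem_children.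
  have [evp _] := parent_spec vj.
  have pvu : parent v != u by have := parent_parent pj; rewrite pu.
  rewrite ifF ?edge_time_up //; apply/negbTE; rewrite -lt0n card_gt0.
  by apply/set0Pn; exists (parent v); rewrite !inE pvu.
have pv : parent v = u by apply: parent_nbr.
by rewrite -pv edge_time_down.
Qed.

Lemma climb_ge0 a : parent a != j -> 0 <= climb a.
Proof.
move=> pj; have ab := mem_children pj.
have E_le : (1 + subtree_edges a <= subtree_edges (parent a))%N.
  by rewrite (subtree_edges_rec pj) (bigD1 a ab) leq_addr.
have exc_le : excursion a <= excursion (parent a).
  rewrite /excursion lerD2l; apply: ler_wpM2l; first exact: ler0n.
  by rewrite ler_nat; apply: leq_trans (leq_addl 1 _) E_le.
have m_ge1 : 1 <= #|children (parent a)|%:R :> R.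
  by rewrite ler1n card_gt0; apply/set0Pn; exists a.
have exc_ge0 : 0 <= excursion a by rewrite addr_ge0 ?mulr_ge0.
rewrite /climb (deg_childrenR pj) addrK; apply: divr_ge0; last by rewrite addr_ge0 ?ler0n.
by rewrite subr_ge0; apply: le_trans exc_le (ler_peMl (le_trans exc_ge0 exc_le) m_ge1).
Qed.

Lemma ascent_ge0 v : 0 <= ascent v.
Proof. by rewrite sumr_ge0 // => a; rewrite in_ancestors => /andP[/climb_ge0]. Qed.

Lemma edge_time_ge0 u v : 0 <= edge_time u v.
Proof.
rewrite /edge_time; case: ifP => // _; case: ifP => _; rewrite ?ascent_ge0 //.
by rewrite !addr_ge0 ?ascent_ge0 ?mulr_ge0.
Qed.

Lemma hit_time_ge0 u v : 0 <= hit_time u v.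
Proof.
rewrite /hit_time; case: ifP => // _; case: ifP => _; rewrite ?edge_time_ge0 //.
by rewrite addr_ge0 ?divr_ge0 ?sumr_ge0 // => w _; rewrite edge_time_ge0.
Qed.

Lemma bb_step_edge u v w : (u == v) || e u v -> v != j ->
  bb_step R e u v w != 0 -> (v == w) || e v w.
Proof.
move=> Suv vj; rewrite /bb_step; case: ifP => [/eqP A0|_].
  rewrite pnatr_eq0 eqb0 negbK => /eqP ->.
  case/orP: Suv => [/eqP uv|euv]; last by rewrite e_sym euv orbT.
  have [evp _] := parent_spec vj.
  suff : (0 < #|nbhd e v :\ u|)%N by rewrite A0.
  rewrite card_gt0; apply/set0Pn; exists (parent v); rewrite !inE evp andbT uv.
  by apply: contraTneq evp => ->; rewrite e_irr.
case: (boolP (w \in _)) => [/setD1P[_]|_]; last by rewrite mul0r eqxx.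
by rewrite inE => ->; rewrite orbT.
Qed.

Lemma access_time_hit_time v : v != j -> access_time R e v j = (hit_time v v)%:E.
Proof.
move=> vj; have deg_gt0 : (0 < deg e v)%N by rewrite deg_children.
have Svv : (v == v) || e v v by rewrite eqxx.
have hit_probE : hit_prob R e v j = fun n => hit_at (bb_step R e) j n v v.
  by apply/funext => n; apply: hit_prob_hit_at.
have := hit_at_series_eq1 (@bb_step_ge0 R T e) (@bb_step_sum1 R T e)
  (S := fun u v => (u == v) || e u v) bb_step_edge (fun u v _ => hit_time_ge0 u v)
  hit_time_first_step Svv.
have := hit_at_mean (@bb_step_ge0 R T e) (@bb_step_sum1 R T e)
  (S := fun u v => (u == v) || e u v) bb_step_edge (fun u v _ => hit_time_ge0 u v)
  hit_time_first_step Svv.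
by rewrite /access_time hit_probE => -> ->; rewrite asboolT.
Qed.

End HitTimes.
End Rooted.
End Tree.

Theorem lemma7 (R : realType) (T : finType) (e : rel T)
  (Hsimple : simple_graph e) (Htree : is_tree e) (i j : T) (Hij : e i j) :
  access_time R e i j =
  (1 + 2 * (#|comp_edges e i j|)%:R * (((deg e i)%:R - 1) / (deg e i)%:R) : R)%:E.
Proof.
case: Hsimple => e_sym e_irr; case: Htree => e_connected e_acyclic.
have ij : i != j by apply: contraTneq Hij => ->; rewrite e_irr.
have parent_i : parent e j i = j by apply: parent_eq => //; apply: comp_del_refl.
rewrite access_time_hit_time // hit_time_diag // ascent_root // addr0.
by rewrite /subtree_edges parent_i.
Qed.
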